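(* Consider the following distributed algorithm. $G=(V,E)$ is a connected undirected graph on $V=\{1,\dots,m\}$ without self-loops, with adjacency matrix $H$, Laplacian $\mathcal{L}$ and maximum degree $\Delta_{\max}$; $0<c<1/\Delta_{\max}$. Priority vectors evolve by $w^i(k+1)=w^i(k)+c\sum_j h^i_j(w^j(k)-w^i(k))$, each $w^i(0)$ having entries in $(0,1)$ summing to $1$. Weights: $a^i_j(k)=w^i_j(k)$ if $(i,j)\in E$; $a^i_i(k)=w^i_i(k)+\sum_{j\ne i,(i,j)\notin E}w^i_j(k)$; $a^i_j(k)=0$ if $j\ne i$, $(i,j)\notin E$. The functions $f_i:\mathbb{R}^n\to\mathbb{R}$ are continuously differentiable and convex, $X\subset\mathbb{R}^n$ is nonempty, compact and convex, $P_X$ is the Euclidean projection onto $X$, and $\alpha_k>0$. Given $x^i(0)\in\mathbb{R}^n$, set $v^i(k)=\sum_j a^i_j(k)x^j(k)$, $d_i(k)=\nabla f_i(x^i(k))$, $x^i(k+1)=P_X[v^i(k)-\alpha_k d_i(k)]$, and $y(k)=\frac1m\sum_{j=1}^m x^j(k)$. Then: (a) if $\lim_{k\to\infty}\alpha_k=0$, then $\lim_{k\to\infty}\|x^i(k)-y(k)\|=0$ for all $i$; (b) if $\sum_{k=1}^\infty\alpha_k^2<\infty$, then $\sum_{k=1}^\infty\alpha_k\|x^i(k)-y(k)\|<\infty$ for all $i$.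
   Context: Each agent $i$ knows only $f_i$; $x^i(k)$ is agent $i$'s decision vector. The gradients are assumed bounded along the iterates: there is a constant $L$ with $\|d_i(k)\|\le L$ for all $i,k$ (the paper derives this from continuity of the gradients and compactness of $X$). *)

From HB Require Import structures.
From mathcomp Require Import all_boot all_order all_algebra.
From mathcomp Require Import all_classical all_reals all_analysis.
Set Implicit Arguments. Unset Strict Implicit. Unset Printing Implicit Defensive.
Import Order.TTheory GRing.Theory Num.Theory.
Import numFieldNormedType.Exports.
Local Open Scope ring_scope.
Local Open Scope classical_set_scope.

Definition enorm (R : realType) (n : nat) (v : 'rV[R]_n) : R :=
  Num.sqrt (\sum_(j < n) v ord0 j ^+ 2).

Definition edot (R : realType) (n : nat) (u v : 'rV[R]_n) : R :=
  \sum_(j < n) u ord0 j * v ord0 j.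

Definition convex_fun (R : realType) (n : nat) (f : 'rV[R]_n -> R) : Prop :=
  forall x y (t : R), 0 <= t <= 1 ->
    f (t *: x + (1 - t) *: y) <= t * f x + (1 - t) * f y.

Definition is_proj (R : realType) (n : nat) (X : set 'rV[R]_n)
  (P : 'rV[R]_n -> 'rV[R]_n) : Prop :=
  forall z, X (P z) /\ forall x, X x -> enorm (z - P z) <= enorm (z - x).

Definition is_gradient (R : realType) (n : nat) (f : 'rV[R]_n -> R)
  (g : 'rV[R]_n -> 'rV[R]_n) : Prop :=
  forall x, differentiable f x /\ forall h, 'd f x h = edot h (g x).

Definition adj (R : realType) (m : nat) (e : rel 'I_m) (i j : 'I_m) : R :=
  (e i j)%:R.

Definition max_degree (m : nat) (e : rel 'I_m) : nat :=
  \max_(i < m) #|[set j | e i j]|.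

(* Weights a^i_j(k) built from the priority vectors w^i(k) (w k i j = w^i_j(k)). *)
Definition weight (R : realType) (m : nat) (e : rel 'I_m)
  (w : nat -> 'I_m -> 'I_m -> R) (k : nat) (i j : 'I_m) : R :=
  if e i j then w k i j
  else if j == i then w k i i + \sum_(l < m | (l != i) && ~~ e i l) w k i l
  else 0.

(* Fix a coordinate.  From the first step on, all iterates lie in
   X, and one step of the algorithm is a row-stochastic averaging whose weights
   are at least delta > 0 on the diagonal and along the edges (the priorities
   never drop below their initial minimum, because c Delta_max < 1), perturbed
   by at most 2 alpha_k L: L bounds the gradients on the compact set X, and the
   projection onto X at most doubles the distance to the average, which lies in
   X by convexity.  Along paths of the connected graph, m consecutive
   averagings shrink the spread max - min of the coordinate by the factor
   1 - delta^m, so the total spread S of all coordinates satisfies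
   S(k + m) <= (1 - delta^m) S(k) + C (alpha_k + ... + alpha_(k+m-1)).
   Such a recursion forces S -> 0 when alpha -> 0, and, after squaring and
   summing, sum_k alpha_k S(k) < oo when sum_k alpha_k^2 < oo.  Finally
   |x^i(k) - y(k)| <= S(k). *)

From HB Require Import structures.
From mathcomp Require Import all_boot all_order all_algebra.
From mathcomp Require Import all_classical all_reals all_analysis.
From mathcomp Require Import lra ring zify.
Set Implicit Arguments. Unset Strict Implicit. Unset Printing Implicit Defensive.
Import Order.TTheory GRing.Theory Num.Theory.
Import numFieldNormedType.Exports.
Local Open Scope ring_scope.
Local Open Scope classical_set_scope.
Definition max_entry (R : realType) (m : nat) (i0 : 'I_m) (z : 'I_m -> R) :=
  \big[Order.max/z i0]_j z j.
Definition min_entry (R : realType) (m : nat) (i0 : 'I_m) (z : 'I_m -> R) :=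
  \big[Order.min/z i0]_j z j.
Definition spread (R : realType) (m : nat) (i0 : 'I_m) (z : 'I_m -> R) :=
  max_entry i0 z - min_entry i0 z.

Section Spread.
Variables (R : realType) (m : nat) (i0 : 'I_m) (z : 'I_m -> R).

Lemma max_entry_ge j : z j <= max_entry i0 z.
Proof. exact: le_bigmax. Qed.

Lemma min_entry_le j : min_entry i0 z <= z j.
Proof. exact: bigmin_le. Qed.

Lemma max_entry_le U : (forall j, z j <= U) -> max_entry i0 z <= U.
Proof. by move=> zU; apply/bigmax_leP; split => // j _; apply: zU. Qed.

Lemma min_entry_ge U : (forall j, U <= z j) -> U <= min_entry i0 z.
Proof. by move=> Uz; apply/bigmin_geP; split => // j _; apply: Uz. Qed.

Lemma spread_ge0 : 0 <= spread i0 z.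
Proof. by rewrite subr_ge0 (le_trans (min_entry_le i0) (max_entry_ge i0)). Qed.

Lemma dist_mean_le_spread i : `|z i - (\sum_j z j) / m%:R| <= spread i0 z.
Proof.
have m_gt0 : 0 < m%:R :> R by rewrite ltr0n (leq_ltn_trans _ (ltn_ord i0)).
have sum_const (a : R) : \sum_(j < m) a = a * m%:R.
  by rewrite sumr_const card_ord mulr_natr.
have lo : min_entry i0 z <= (\sum_j z j) / m%:R.
  by rewrite ler_pdivlMr // -sum_const; apply: ler_sum => j _; apply: min_entry_le.
have hi : (\sum_j z j) / m%:R <= max_entry i0 z.
  by rewrite ler_pdivrMr // -sum_const; apply: ler_sum => j _; apply: max_entry_ge.
have := max_entry_ge i; have := min_entry_le i; rewrite /spread ler_norml; lra.
Qed.

End Spread.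

Section PerturbedAveraging.
Variables (R : realType) (m : nat) (e : rel 'I_m) (B : nat -> 'I_m -> 'I_m -> R)
  (eta : R).
Hypothesis B_ge0 : forall t i j, 0 <= B t i j.
Hypothesis B_row1 : forall t i, \sum_j B t i j = 1.
Hypothesis eta_ge0 : 0 <= eta.
Hypothesis B_diag : forall t i, eta <= B t i i.
Hypothesis B_edge : forall t i j, e j i -> eta <= B t i j.

Lemma supersolution_along_path (T : nat) (v : nat -> 'I_m -> R) (l : 'I_m)
    (gam : R) :
  (forall t i, (t < T)%N -> 0 <= v t i) ->
  (forall t i, (t < T)%N -> \sum_j B t i j * v t j <= v t.+1 i) ->
  0 <= gam -> gam <= v 0%N l ->
  forall t p, (t <= T)%N -> path e l p -> (size p <= t)%N ->
    eta ^+ t * gam <= v t (last l p).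
Proof.
move=> v_ge0 v_super gam_ge0 gam_le; elim=> [|t IH] p tT pp sp.
  by move: sp; rewrite leqn0 => /nilP ->; rewrite expr0 mul1r.
have term_le i j : B t i j * v t j <= v t.+1 i.
  apply: le_trans (v_super _ _ tT); rewrite (bigD1 j) //= lerDl.
  by apply: sumr_ge0 => k _; rewrite mulr_ge0 ?v_ge0.
have etag_ge0 : 0 <= eta ^+ t * gam by rewrite mulr_ge0 ?exprn_ge0.
rewrite exprS -mulrA; case: (leqP (size p) t) => st.
  apply: le_trans (term_le _ (last l p)); apply: ler_pM => //.
  by apply: IH => //; apply: ltnW.
case/lastP: p pp sp st => [|p a] //.
rewrite rcons_path last_rcons size_rcons !ltnS => /andP[pp ea] sp _.
apply: le_trans (term_le a (last l p)); apply: ler_pM; rewrite ?B_edge //.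
by apply: IH => //; apply: ltnW.
Qed.

Lemma perturbed_averaging_upper_bound (D : nat) (z eps : nat -> 'I_m -> R)
    (E c0 : R) (i0 : 'I_m) :
  (forall t i, z t.+1 i = \sum_j B t i j * z t j + eps t i) ->
  (forall t i, (t < D)%N -> `|eps t i| <= E) ->
  (forall i, exists p, [/\ path e i0 p, last i0 p = i & (size p <= D)%N]) ->
  (forall i, z 0%N i <= c0) ->
  forall i, z D i <= c0 - eta ^+ D * (c0 - z 0%N i0) + D%:R * E.
Proof.
move=> z_rec eps_le reach_within z0_le i.
(* [v] is a nonnegative supersolution of the averaging, hence stays
   above [eta ^+ t] times its initial value along paths of length [t]. *)
pose v t j := c0 - z t j + t%:R * E.
have v_super t j : (t < D)%N -> \sum_k B t j k * v t k <= v t.+1 j.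
  move=> tD; have := eps_le t j tD; rewrite ler_norml => /andP[_ epsE].
  have -> : \sum_k B t j k * v t k = c0 - \sum_k B t j k * z t k + t%:R * E.
    under eq_bigr => k _ do rewrite mulrDr mulrBr.
    by rewrite big_split sumrB /= -!mulr_suml B_row1 !mul1r.
  rewrite /v z_rec -natr1 mulrDl mul1r; lra.
have v_ge0 t j : (t <= D)%N -> 0 <= v t j.
  elim: t j => [|t IH] j tD; first by rewrite /v mul0r addr0 subr_ge0.
  apply: le_trans (v_super _ _ tD); apply: sumr_ge0 => k _.
  by rewrite mulr_ge0 // IH // ltnW.
have [p [pp <- sp]] := reach_within i.
have := @supersolution_along_path D v i0 (c0 - z 0%N i0)
  (fun t j tD => v_ge0 t j (ltnW tD)) v_super _ _ D p (leqnn D) pp sp.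
rewrite /v mul0r addr0 subr_ge0 => /(_ (z0_le i0) (lexx _)); lra.
Qed.

Lemma perturbed_averaging_spread (D : nat) (z eps : nat -> 'I_m -> R) (E : R)
    (i0 : 'I_m) :
  (forall t i, z t.+1 i = \sum_j B t i j * z t j + eps t i) ->
  (forall t i, (t < D)%N -> `|eps t i| <= E) ->
  (forall i, exists p, [/\ path e i0 p, last i0 p = i & (size p <= D)%N]) ->
  spread i0 (z D) <= (1 - eta ^+ D) * spread i0 (z 0%N) + 2 * D%:R * E.
Proof.
move=> z_rec eps_le reach_within.
set M := max_entry i0 (z 0%N); set mu := min_entry i0 (z 0%N).
have neg_rec t i : - z t.+1 i = \sum_j B t i j * - z t j + - eps t i.
  rewrite z_rec opprD -sumrN; congr (_ + _).
  by apply: eq_bigr => j _; rewrite mulrN.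
have up := perturbed_averaging_upper_bound z_rec eps_le reach_within
  (max_entry_ge i0 (z 0%N)).
have neg_eps_le t i : (t < D)%N -> `|- eps t i| <= E.
  by rewrite normrN; apply: eps_le.
have neg_z0_le i : - z 0%N i <= - mu by rewrite lerN2 min_entry_le.
have lo := perturbed_averaging_upper_bound neg_rec neg_eps_le reach_within
  neg_z0_le.
have maxD : max_entry i0 (z D) <= M - eta ^+ D * (M - z 0%N i0) + D%:R * E.
  exact: max_entry_le.
have minD : mu + eta ^+ D * (z 0%N i0 - mu) - D%:R * E <= min_entry i0 (z D).
  by apply: min_entry_ge => j; have := lo j; rewrite /=; lra.
rewrite /spread -/M -/mu; lra.
Qed.

End PerturbedAveraging.

Lemma sum_shift_le (R : realType) (u : nat -> R) (r N : nat) :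
  (forall k, 0 <= u k) -> \sum_(k < N) u (r + k)%N <= \sum_(k < r + N) u k.
Proof. by move=> u_ge0; rewrite big_split_ord /= lerDr sumr_ge0. Qed.

Lemma sqr_sum_le (R : realType) (D : nat) (u : 'I_D -> R) :
  (\sum_r u r) ^+ 2 <= D%:R * \sum_r u r ^+ 2.
Proof.
have -> : (\sum_r u r) ^+ 2 = \sum_r \sum_q u r * u q.
  by rewrite expr2 mulr_suml; apply: eq_bigr => r _; rewrite mulr_sumr.
have -> : D%:R * \sum_r u r ^+ 2 = \sum_r \sum_q (u r ^+ 2 / 2 + u q ^+ 2 / 2).
  under [RHS]eq_bigr => r _ do rewrite big_split /= sumr_const card_ord.
  rewrite big_split /= sumr_const card_ord sumrMnl -!mulr_suml -mulrnDl.
  by rewrite -splitr mulr_natl.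
apply: ler_sum => r _; apply: ler_sum => q _.
have := sqr_ge0 (u r - u q); rewrite !expr2; lra.
Qed.

Lemma sqr_le_contraction (R : realType) (rho x y z : R) :
  0 <= rho < 1 -> 0 <= z -> z <= rho * y + x ->
  z ^+ 2 <= rho * y ^+ 2 + x ^+ 2 / (1 - rho).
Proof.
move=> /andP[rho_ge0 rho_lt1] z_ge0 z_le.
have rho1_gt0 : 0 < 1 - rho by rewrite subr_gt0.
apply: (@le_trans _ _ ((rho * y + x) ^+ 2)).
  by rewrite !expr2 ler_pM // (le_trans z_ge0).
rewrite -(ler_pM2l rho1_gt0) mulrDr [_ * (x ^+ 2 / _)]mulrC divfK ?gt_eqF //.
(* convexity of the square, with defect [rho * ((1 - rho) * y - x) ^+ 2] *)
have := mulr_ge0 rho_ge0 (sqr_ge0 ((1 - rho) * y - x)).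
have -> : rho * ((1 - rho) * y - x) ^+ 2 =
  (1 - rho) * (rho * y ^+ 2) + x ^+ 2 - (1 - rho) * (rho * y + x) ^+ 2 by ring.
lra.
Qed.

Lemma window_sum_sqr_le (R : realType) (a : nat -> R) (D N : nat) (Q : R) :
  (forall N, \sum_(k < N) a k ^+ 2 <= Q) ->
  \sum_(k < N) (\sum_(r < D) a (r + k)%N) ^+ 2 <= D%:R * (D%:R * Q).
Proof.
move=> a2_le.
apply: (@le_trans _ _ (\sum_(k < N) D%:R * \sum_(r < D) a (r + k)%N ^+ 2)).
  by apply: ler_sum => k _; apply: sqr_sum_le.
rewrite -mulr_sumr ler_wpM2l // exchange_big /=.
have shifted_le (r : 'I_D) : \sum_(k < N) a (r + k)%N ^+ 2 <= Q.
  exact: le_trans (sum_shift_le _ _ (fun k => sqr_ge0 (a k))) (a2_le _).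
apply: (@le_trans _ _ (\sum_(r < D) Q)); first by apply: ler_sum => r _.
by rewrite sumr_const card_ord mulr_natl.
Qed.

Section ContractionRecursion.
Variables (R : realType) (s a : nat -> R) (rho C : R) (D : nat).
Hypothesis s_ge0 : forall k, 0 <= s k.
Hypothesis a_ge0 : forall k, 0 <= a k.
Hypothesis rho_ge0 : 0 <= rho.
Hypothesis rho_lt1 : rho < 1.
Hypothesis C_ge0 : 0 <= C.
Hypothesis D_gt0 : (0 < D)%N.
Hypothesis s_rec :
  forall k, s (D + k)%N <= rho * s k + C * \sum_(r < D) a (r + k)%N.

Lemma contraction_cvg0 : a @ \oo --> 0 -> s @ \oo --> 0.
Proof.
move=> a_cvg0.
pose b k := C * \sum_(r < D) a (r + k)%N.
have b_cvg0 : b @ \oo --> 0.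
  have : (fun k => \sum_(r < D) a (r + k)%N) @ \oo --> \sum_(r < D) (0 : R).
    apply: cvg_big => [|r _]; first exact: add_continuous.
    exact: cvg_comp (cvg_addnl r) a_cvg0.
  by rewrite big1 // => /(cvgM (cvg_cst C)); rewrite mulr0.
apply/cvgr0Pnorm_le => eps eps_gt0.
have eps2_gt0 : 0 < eps / 2 by rewrite divr_gt0.
have rho1_gt0 : 0 < 1 - rho by rewrite subr_gt0.
have [N _ b_small] := (cvgr0Pnorm_le _).1 b_cvg0 _ (mulr_gt0 rho1_gt0 eps2_gt0).
pose s0 := \sum_(r < D) s (N + r)%N.
(* the perturbations, each at most [(1 - rho) * (eps / 2)], add up
   geometrically to at most [eps / 2] *)
have block_bound j r : (r < D)%N -> s (N + r + j * D)%N <= rho ^+ j * s0 + eps / 2.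
  elim: j => [|j IH] rD.
    rewrite mul0n addn0 expr0 mul1r.
    have : s (N + r)%N <= s0.
      by rewrite /s0 (bigD1 (Ordinal rD)) //= lerDl sumr_ge0.
    lra.
  rewrite mulSn addnCA.
  apply: le_trans (s_rec _) _.
  have := b_small (N + r + j * D)%N; rewrite ger0_norm ?mulr_ge0 ?sumr_ge0 //.
  move=> /(_ (leq_trans (leq_addr _ _) (leq_addr _ _))) b_le.
  rewrite /b in b_le; have := ler_wpM2l rho_ge0 (IH rD).
  rewrite exprS -mulrA; lra.
have rho_norm_lt1 : `|rho| < 1 by rewrite ger0_norm.
have [J _ geom_small] :=
  (cvgr0Pnorm_le _).1 (cvg_geometric s0 rho_norm_lt1) _ eps2_gt0.
exists (N + J * D)%N => // k /= kJ.
rewrite ger0_norm //.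
have k_eq : k = (N + (k - N) %% D + (k - N) %/ D * D)%N.
  have := divn_eq (k - N) D; lia.
have jJ : (J <= (k - N) %/ D)%N by rewrite leq_divRL //; lia.
rewrite k_eq; apply: le_trans (block_bound _ _ (ltn_pmod _ D_gt0)) _.
have := geom_small _ jJ; rewrite /geometric /= mulrC.
have := ler_norm (rho ^+ ((k - N) %/ D) * s0); lra.
Qed.

Lemma contraction_weighted_sum_bounded (Q : R) :
  (forall N, \sum_(k < N) a k ^+ 2 <= Q) ->
  exists M, forall N, \sum_(k < N) a k * s k <= M.
Proof.
move=> a2_le.
have rho1_gt0 : 0 < 1 - rho by rewrite subr_gt0.
pose w k := \sum_(r < D) a (r + k)%N.
pose K := C ^+ 2 / (1 - rho).
have K_ge0 : 0 <= K by rewrite divr_ge0 ?sqr_ge0 ?ltW.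
have s2_rec k : s (D + k)%N ^+ 2 <= rho * s k ^+ 2 + K * w k ^+ 2.
  have -> : K * w k ^+ 2 = (C * w k) ^+ 2 / (1 - rho) by rewrite /K exprMn mulrAC.
  by apply: sqr_le_contraction; rewrite ?rho_ge0 ?rho_lt1 ?s_ge0 ?s_rec.
pose s0 := \sum_(k < D) s k ^+ 2.
have s2_le N : \sum_(k < N) s k ^+ 2 <= (s0 + K * (D%:R * (D%:R * Q))) / (1 - rho).
  have prefix_le : \sum_(k < N) s k ^+ 2 <= s0 + \sum_(k < N) s (D + k)%N ^+ 2.
    have : \sum_(k < N) s k ^+ 2 <= \sum_(k < N + D) s k ^+ 2.
      by rewrite big_split_ord /= lerDl sumr_ge0 // => k _; apply: sqr_ge0.
    by rewrite [(N + D)%N]addnC big_split_ord.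
  have shifted_le : \sum_(k < N) s (D + k)%N ^+ 2 <=
      rho * \sum_(k < N) s k ^+ 2 + K * \sum_(k < N) w k ^+ 2.
    by rewrite !mulr_sumr -big_split /=; apply: ler_sum => k _; apply: s2_rec.
  have w2_le : \sum_(k < N) w k ^+ 2 <= D%:R * (D%:R * Q).
    exact: window_sum_sqr_le.
  have := ler_wpM2l K_ge0 w2_le.
  rewrite ler_pdivlMr //; lra.
exists ((Q + (s0 + K * (D%:R * (D%:R * Q))) / (1 - rho)) / 2) => N.
apply: (@le_trans _ _ (\sum_(k < N) (a k ^+ 2 + s k ^+ 2) / 2)).
  by apply: ler_sum => k _; have := sqr_ge0 (a k - s k); rewrite !expr2; lra.
rewrite -mulr_suml big_split /=.
have := a2_le N; have := s2_le N; lra.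
Qed.

End ContractionRecursion.

Section NonnegSeries.
Variables (R : realType) (u : nat -> R).
Hypothesis u_ge0 : forall k, 0 <= u k.

Lemma nneg_series_nondecreasing : nondecreasing_seq (series u).
Proof.
move=> a b ab; rewrite !seriesEnat /=.
exact: (nondecreasing_series (fun k _ _ => u_ge0 k)).
Qed.

Lemma nneg_series_shift_le_lim :
  cvgn (series u) -> forall N, \sum_(k < N) u k.+1 <= limn (series u).
Proof.
move=> u_cvg N.
apply: le_trans (nondecreasing_cvgn_le nneg_series_nondecreasing u_cvg N.+1).
by rewrite seriesEord /= big_ord_recl lerDr.
Qed.

Lemma nneg_series_cvgn (M : R) :
  (forall N, \sum_(k < N) u k.+1 <= M) -> cvgn (series u).
Proof.
move=> u_le; apply: nondecreasing_is_cvgn; first exact: nneg_series_nondecreasing.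
exists (u 0%N + M) => _ [N _ <-].
apply: le_trans (nneg_series_nondecreasing (leqnSn N)) _.
by rewrite seriesEord /= big_ord_recl lerD2l.
Qed.

End NonnegSeries.

Section EuclideanNorm.
Variables (R : realType) (n : nat).
Implicit Types (u v z : 'rV[R]_n).

Lemma enorm_ge0 u : 0 <= enorm u.
Proof. exact: sqrtr_ge0. Qed.

Lemma abs_coord_le_enorm u q : `|u ord0 q| <= enorm u.
Proof.
rewrite -sqrtr_sqr /enorm ler_wsqrtr // (bigD1 q) //= lerDl.
by apply: sumr_ge0 => j _; apply: sqr_ge0.
Qed.

Lemma enorm_le_sum_abs u : enorm u <= \sum_q `|u ord0 q|.
Proof.
rewrite -[X in _ <= X]ger0_norm ?sumr_ge0 // -sqrtr_sqr /enorm ler_wsqrtr //.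
rewrite expr2 mulr_suml; apply: ler_sum => r _.
rewrite mulr_sumr (bigD1 r) //= -normrM -expr2 ger0_norm ?sqr_ge0 // lerDl.
by apply: sumr_ge0 => j _; apply: mulr_ge0.
Qed.

Lemma enorm_le_mx_norm u : enorm u <= n%:R * `|u|.
Proof.
have coord_le q : `|u ord0 q| <= `|u|.
  rewrite /Num.norm /= mx_normrE.
  exact: (le_bigmax _ (fun ij : 'I_1 * 'I_n => `|u ij.1 ij.2|) (ord0, q)).
apply: le_trans (enorm_le_sum_abs u) (le_trans (ler_sum _ (fun q _ => coord_le q)) _).
by rewrite sumr_const card_ord mulr_natl.
Qed.

Lemma enormZ (a : R) u : enorm (a *: u) = `|a| * enorm u.
Proof.
rewrite /enorm; under eq_bigr => j _ do rewrite mxE exprMn.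
by rewrite -mulr_sumr sqrtrM ?sqr_ge0 // sqrtr_sqr.
Qed.

Lemma proj_coord_dist_le (X : set 'rV[R]_n) (P : 'rV[R]_n -> 'rV[R]_n) z v q :
  is_proj X P -> X v -> `|(P z - v) ord0 q| <= 2 * enorm (z - v).
Proof.
move=> P_proj Xv; have [_ /(_ v Xv) Pz_nearest] := P_proj z.
have -> : (P z - v) ord0 q = (z - v) ord0 q - (z - P z) ord0 q by rewrite !mxE; ring.
apply: le_trans (ler_normB _ _) _.
have := abs_coord_le_enorm (z - v) q; have := abs_coord_le_enorm (z - P z) q; lra.
Qed.

End EuclideanNorm.

Lemma enorm_sub_mean_le_spread (R : realType) (m n : nat) (i0 : 'I_m)
    (u : 'I_m -> 'rV[R]_n) i :
  enorm (u i - (m%:R)^-1 *: \sum_j u j) <= \sum_q spread i0 (fun j => u j ord0 q).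
Proof.
apply: le_trans (enorm_le_sum_abs _) _; apply: ler_sum => q _.
rewrite !mxE summxE mulrC.
exact: (dist_mean_le_spread i0 (fun j => u j ord0 q)).
Qed.

Lemma connect_short_path (T : finType) (e : rel T) (x y : T) :
  connect e x y -> exists p, [/\ path e x p, last x p = y & (size p < #|T|)%N].
Proof.
move=> /connectP[p0 p0_path ->]; case: (shortenP p0_path) => p p_path p_uniq _.
exists p; split => //.
by rewrite -ltnS -/(size (x :: p)) -(card_uniqP p_uniq) ltnS max_card.
Qed.

Lemma convex_set_conv2 (R : realType) (n : nat) (X : set 'rV[R]_n) u v (t : R) :
  convex_set X -> X u -> X v -> 0 <= t <= 1 -> X (t *: u + (1 - t) *: v).
Proof.
move=> X_convex Xu Xv /andP[t_ge0 t_le1].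
have := X_convex u v (Itv01 t_ge0 t_le1); rewrite !inE; exact.
Qed.

Lemma convex_set_weighted_mean (R : realType) (n : nat) (X : set 'rV[R]_n)
    (I : eqType) (r : seq I) (a : I -> R) (p : I -> 'rV[R]_n) :
  convex_set X -> (forall j, 0 <= a j) -> (forall j, X (p j)) ->
  0 < \sum_(j <- r) a j ->
  X ((\sum_(j <- r) a j)^-1 *: \sum_(j <- r) a j *: p j).
Proof.
move=> X_convex a_ge0 Xp; elim: r => [|j r IH]; first by rewrite big_nil ltxx.
rewrite !big_cons; set s := \sum_(j <- r) a j; set q := \sum_(j <- r) a j *: p j.
have [s_eq0|s_neq0] := eqVneq s 0.
  have q_eq0 : q = 0.
    rewrite /q big_seq big1 // => i ir.
    move/eqP: s_eq0; rewrite /s psumr_eq0 // => /allP/(_ i ir)/eqP ->.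
    by rewrite scale0r.
  by rewrite s_eq0 q_eq0 !addr0 => aj_gt0; rewrite scalerA mulVf ?scale1r ?gt_eqF.
move=> ajs_gt0; have s_gt0 : 0 < s by rewrite lt_def s_neq0 sumr_ge0.
have t_01 : 0 <= a j / (a j + s) <= 1.
  by rewrite divr_ge0 ?a_ge0 ?(ltW ajs_gt0) //= ler_pdivrMr // mul1r lerDl ltW.
have := convex_set_conv2 X_convex (Xp j) (IH s_gt0) t_01.
congr X; rewrite scalerDr !scalerA mulrC; congr (_ + _ *: _).
by rewrite -/s; field; rewrite !gt_eqF.
Qed.

Lemma compact_bounded_family (R : realType) (T : topologicalType)
    (V : normedModType R) (I : finType) (g : I -> T -> V) (X : set T) :
  (forall i, continuous (g i)) -> compact X ->
  exists2 M, 0 <= M & forall i v, X v -> `|g i v| <= M.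
Proof.
move=> g_cont X_compact.
have g_bounded i : \forall M \near +oo, forall y, (g i @` X) y -> `|y| <= M.
  apply: compact_bounded; apply: continuous_compact X_compact.
  exact: continuous_subspaceT.
have [M0 [_ M0_bound]] := filter_forall _ g_bounded.
exists (`|M0| + 1) => [|i v Xv]; first by rewrite addr_ge0.
apply: (M0_bound _ _ i (g i v)); last by exists v.
by rewrite (le_lt_trans (ler_norm M0)) // ltrDl.
Qed.

Lemma adj_row_sum_le_max_degree (R : realType) (m : nat) (e : rel 'I_m) i :
  \sum_l adj R e i l <= (max_degree e)%:R.
Proof.
rewrite /adj -natr_sum ler_nat.
have -> : (\sum_l e i l)%N = #|[set j | e i j]|.
  rewrite -sum1_card [RHS]big_mkcond /=; apply: eq_bigr => l _.
  by case: ifPn => [|/negP]; rewrite ?in_setE /=; case: (e i l).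
exact: (leq_bigmax (F := fun i => #|[set j | e i j]|)).
Qed.

Section Priorities.
Variables (R : realType) (m : nat) (e : rel 'I_m) (c : R)
  (w : nat -> 'I_m -> 'I_m -> R).
Hypothesis w_rec : forall k i j,
  w k.+1 i j = w k i j + c * \sum_(l < m) adj R e i l * (w k l j - w k i j).

Lemma priority_row_sum :
  (forall i, \sum_j w 0%N i j = 1) -> forall k i, \sum_j w k i j = 1.
Proof.
move=> w0_row1; elim=> [|k IH] i; first exact: w0_row1.
under eq_bigr => j _ do rewrite w_rec.
rewrite big_split /= IH -mulr_sumr exchange_big /= big1 ?mulr0 ?addr0 // => l _.
by rewrite -mulr_sumr sumrB !IH subrr mulr0.
Qed.

Lemma priority_lower_bound (delta : R) :
  0 < c -> c * (max_degree e)%:R < 1 -> (forall i j, delta <= w 0%N i j) ->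
  forall k i j, delta <= w k i j.
Proof.
move=> c_gt0 c_deg_lt1 w0_ge; elim=> [|k IH] i j; first exact: w0_ge.
set d := \sum_l adj R e i l.
have cd_le1 : 0 <= 1 - c * d.
  rewrite subr_ge0; apply: le_trans (ltW c_deg_lt1).
  by apply: ler_wpM2l; [exact: ltW | exact: adj_row_sum_le_max_degree].
(* a convex combination of the previous priorities *)
have -> : w k.+1 i j = (1 - c * d) * w k i j + c * \sum_l adj R e i l * w k l j.
  rewrite w_rec; under eq_bigr => l _ do rewrite mulrBr.
  by rewrite sumrB -mulr_suml -/d; ring.
have nbrs_ge : delta * d <= \sum_l adj R e i l * w k l j.
  by rewrite /d mulr_sumr; apply: ler_sum => l _; rewrite mulrC ler_wpM2l ?ler0n.
have := ler_wpM2l (ltW c_gt0) nbrs_ge.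
have := ler_wpM2l cd_le1 (IH i j).
lra.
Qed.

End Priorities.

Section Weights.
Variables (R : realType) (m : nat) (e : rel 'I_m) (w : nat -> 'I_m -> 'I_m -> R)
  (k : nat) (i : 'I_m).
Hypothesis e_irr : irreflexive e.

Lemma weight_ge0 j : (forall l, 0 <= w k i l) -> 0 <= weight e w k i j.
Proof.
move=> w_ge0; rewrite /weight; case: (e i j) => //; case: (j == i) => //.
by rewrite addr_ge0 // sumr_ge0.
Qed.

Lemma weight_diag_ge : (forall l, 0 <= w k i l) -> w k i i <= weight e w k i i.
Proof. by move=> w_ge0; rewrite /weight e_irr eqxx lerDl sumr_ge0. Qed.

Lemma weight_row_sum : \sum_j weight e w k i j = \sum_j w k i j.
Proof.
rewrite (bigID (e i)) [RHS](bigID (e i)) /=; congr (_ + _).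
  by apply: eq_bigr => j eij; rewrite /weight eij.
have nii : ~~ e i i by rewrite e_irr.
rewrite (bigD1 i nii) [RHS](bigD1 i nii) /= big1 ?addr0; last first.
  by move=> j /andP[nij ji]; rewrite /weight (negbTE nij) (negbTE ji).
rewrite /weight e_irr eqxx; congr (_ + _); apply: eq_bigl => j.
by rewrite andbC.
Qed.

End Weights.

Section ConsensusOfIterates.
Variables (R : realType) (m n : nat) (e : rel 'I_m)
  (w : nat -> 'I_m -> 'I_m -> R) (g : 'I_m -> 'rV[R]_n -> 'rV[R]_n)
  (X : set 'rV[R]_n) (PX : 'rV[R]_n -> 'rV[R]_n) (alpha : nat -> R)
  (x : nat -> 'I_m -> 'rV[R]_n) (delta L : R).
Hypothesis e_sym : symmetric e.
Hypothesis e_irr : irreflexive e.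
Hypothesis e_connected : forall i j, connect e i j.
Hypothesis w_row1 : forall k i, \sum_j w k i j = 1.
Hypothesis delta_gt0 : 0 < delta.
Hypothesis delta_le1 : delta <= 1.
Hypothesis w_ge : forall k i j, delta <= w k i j.
Hypothesis L_ge0 : 0 <= L.
Hypothesis g_le : forall i v, X v -> enorm (g i v) <= L.
Hypothesis X_convex : convex_set X.
Hypothesis PX_proj : is_proj X PX.
Hypothesis alpha_gt0 : forall k, 0 < alpha k.
Hypothesis x_rec : forall k i,
  x k.+1 i = PX (\sum_j weight e w k i j *: x k j - alpha k *: g i (x k i)).

Definition disagreement (i0 : 'I_m) (k : nat) : R :=
  \sum_q spread i0 (fun i => x k i ord0 q).

Let w_ge0 k i j : 0 <= w k i j.
Proof. exact: le_trans (ltW delta_gt0) (w_ge k i j). Qed.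

Let weight_row1 k i : \sum_j weight e w k i j = 1.
Proof. by rewrite weight_row_sum. Qed.

Lemma iterate_mem k i : X (x k.+1 i).
Proof. by rewrite x_rec; apply: (proj1 (PX_proj _)). Qed.

Lemma weighted_average_mem k i : X (\sum_j weight e w k.+1 i j *: x k.+1 j).
Proof.
have := convex_set_weighted_mean (r := index_enum 'I_m)
  (a := weight e w k.+1 i) X_convex (fun j => weight_ge0 e j (w_ge0 k.+1 i))
  (iterate_mem k).
by rewrite weight_row1 invr1 scale1r; apply; rewrite ltr01.
Qed.

Lemma step_perturbation_le k i q :
  `|x k.+2 i ord0 q - \sum_j weight e w k.+1 i j * x k.+1 j ord0 q|
    <= 2 * (alpha k.+1 * L).
Proof.
set v := \sum_j weight e w k.+1 i j *: x k.+1 j.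
have -> : \sum_j weight e w k.+1 i j * x k.+1 j ord0 q = v ord0 q.
  by rewrite /v summxE; apply: eq_bigr => j _; rewrite mxE.
rewrite x_rec; set z := v - _.
have -> : PX z ord0 q - v ord0 q = (PX z - v) ord0 q by rewrite !mxE.
apply: le_trans (proj_coord_dist_le _ _ PX_proj (weighted_average_mem k i)) _.
rewrite /z addrAC subrr add0r -scaleNr enormZ normrN gtr0_norm //.
by rewrite !ler_pM2l ?alpha_gt0 // g_le //; apply: iterate_mem.
Qed.

Lemma disagreement_contraction (i0 : 'I_m) k :
  disagreement i0 (m + k).+1 <= (1 - delta ^+ m) * disagreement i0 k.+1
    + 4 * (m * n)%:R * L * \sum_(r < m) alpha (r + k).+1.
Proof.
pose E := 2 * L * \sum_(r < m) alpha (r + k).+1.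
have reach_within i : exists p, [/\ path e i0 p, last i0 p = i & (size p <= m)%N].
  have [p [p_path p_last p_size]] := connect_short_path (e_connected i0 i).
  by rewrite card_ord in p_size; exists p; split => //; apply: ltnW.
have coord_spread q :
  spread i0 (fun i => x (m + k).+1 i ord0 q)
    <= (1 - delta ^+ m) * spread i0 (fun i => x k.+1 i ord0 q) + 2 * m%:R * E.
  apply: (@perturbed_averaging_spread _ _ e (fun t => weight e w (t + k).+1)
    delta _ _ _ _ _ m (fun t i => x (t + k).+1 i ord0 q)
    (fun t i => x (t + k).+2 i ord0 q
       - \sum_j weight e w (t + k).+1 i j * x (t + k).+1 j ord0 q)).
  - by move=> t i j; apply: weight_ge0.
  - by move=> t i; apply: weight_row1.
  - exact: ltW.
  - move=> t i.
    exact: le_trans (w_ge _ _ _) (weight_diag_ge e_irr (w_ge0 _ _)).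
  - by move=> t i j eji; rewrite /weight e_sym eji.
  - by move=> t i; rewrite addrC subrK.
  - move=> t i tm; apply: le_trans (step_perturbation_le _ _ _) _.
    rewrite /E -mulrA [_ * L]mulrC ler_pM2l //; apply: ler_wpM2l => //.
    rewrite (bigD1 (Ordinal tm)) //= lerDl.
    by apply: sumr_ge0 => r _; apply: ltW.
  - exact: reach_within.
apply: le_trans (ler_sum _ (fun q _ => coord_spread q)) _.
rewrite big_split /= -mulr_sumr sumr_const card_ord lerD2l /E -mulr_natr natrM.
lra.
Qed.

Let rho_ge0 : 0 <= 1 - delta ^+ m.
Proof. by rewrite subr_ge0 exprn_ile1 // ltW. Qed.

Let rho_lt1 : 1 - delta ^+ m < 1.
Proof. by rewrite ltrBlDr ltrDl exprn_gt0. Qed.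

Let C_ge0 : 0 <= 4 * (m * n)%:R * L.
Proof. by rewrite !mulr_ge0. Qed.

Let disagreement_ge0 i0 k : 0 <= disagreement i0 k.
Proof. by apply: sumr_ge0 => q _; apply: spread_ge0. Qed.

Let alpha_ge0 k : 0 <= alpha k.
Proof. exact: ltW. Qed.

Lemma consensus_of_vanishing_steps i : alpha @ \oo --> 0 ->
  (fun k => enorm (x k i - (m%:R)^-1 *: \sum_j x k j)) @ \oo --> 0.
Proof.
move=> alpha_cvg0; rewrite -cvg_shiftS.
have S_cvg0 : (fun k => disagreement i k.+1) @ \oo --> 0.
  apply: (@contraction_cvg0 _ _ (fun k => alpha k.+1) _ _ m
    (fun k => disagreement_ge0 i k.+1) (fun k => alpha_ge0 k.+1)
    rho_ge0 rho_lt1 C_ge0).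
  - by apply: leq_trans (ltn_ord i).
  - exact: disagreement_contraction.
  - by rewrite cvg_shiftS.
apply: (squeeze_cvgr _ (cvg_cst 0) S_cvg0).
by near=> k; rewrite enorm_ge0 enorm_sub_mean_le_spread.
Unshelve. all: by end_near.
Qed.

Lemma consensus_weighted_summable i : cvgn (series (fun k => alpha k ^+ 2)) ->
  cvgn (series (fun k => alpha k * enorm (x k i - (m%:R)^-1 *: \sum_j x k j))).
Proof.
move=> alpha2_cvg.
have [M sum_le] := @contraction_weighted_sum_bounded _
  (fun k => disagreement i k.+1) (fun k => alpha k.+1) _ _ _
  (fun k => disagreement_ge0 _ _) rho_ge0 rho_lt1 (disagreement_contraction i) _
  (nneg_series_shift_le_lim (fun k => sqr_ge0 (alpha k)) alpha2_cvg).
apply: (nneg_series_cvgn _ (M := M)) => [k|N]; first by rewrite mulr_ge0 ?enorm_ge0.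
apply: le_trans (sum_le N); apply: ler_sum => k _; apply: ler_wpM2l => //.
exact: enorm_sub_mean_le_spread.
Qed.

End ConsensusOfIterates.

Theorem lemma4p7 (R : realType) (m n : nat)
  (e : rel 'I_m) (c : R)
  (w : nat -> 'I_m -> 'I_m -> R)
  (f : 'I_m -> 'rV[R]_n -> R) (g : 'I_m -> 'rV[R]_n -> 'rV[R]_n)
  (X : set 'rV[R]_n) (PX : 'rV[R]_n -> 'rV[R]_n)
  (alpha : nat -> R) (x : nat -> 'I_m -> 'rV[R]_n) :
  (* G: undirected, no self-loops, connected *)
  symmetric e -> irreflexive e -> (forall i j, connect e i j) ->
  (* 0 < c < 1 / Delta_max *)
  0 < c -> c * (max_degree e)%:R < 1 ->
  (* priority vectors *)
  (forall i j, 0 < w 0%N i j < 1) ->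
  (forall i, \sum_(j < m) w 0%N i j = 1) ->
  (forall k i j, w k.+1 i j =
     w k i j + c * \sum_(l < m) adj R e i l * (w k l j - w k i j)) ->
  (* objective functions *)
  (forall i, is_gradient (f i) (g i)) ->
  (forall i, continuous (g i)) ->
  (forall i, convex_fun (f i)) ->
  (* constraint set and projection *)
  X !=set0 -> compact X -> convex_set X -> is_proj X PX ->
  (* step sizes *)
  (forall k, 0 < alpha k) ->
  (* iteration *)
  (forall k i, x k.+1 i =
     PX ((\sum_(j < m) weight e w k i j *: x k j) - alpha k *: g i (x k i))) ->
  let y := fun k => (m%:R)^-1 *: \sum_(j < m) x k j in
  (alpha @ \oo --> 0 ->
     forall i, (fun k => enorm (x k i - y k)) @ \oo --> 0)
  /\
  (cvgn (series (fun k => alpha k ^+ 2)) ->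
     forall i, cvgn (series (fun k => alpha k * enorm (x k i - y k)))).
Proof.
move=> e_sym e_irr e_connected c_gt0 c_deg_lt1 w0_01 w0_row1 w_rec _ g_cont _ _
  X_compact X_convex PX_proj alpha_gt0 x_rec y.
pose delta := \big[Order.min/1]_(p : 'I_m * 'I_m) w 0%N p.1 p.2.
have delta_gt0 : 0 < delta.
  by apply: lt_bigmin => // p _; case/andP: (w0_01 p.1 p.2).
have delta_le1 : delta <= 1 by exact: bigmin_le_id.
have w0_ge i j : delta <= w 0%N i j by exact: (bigmin_le _ (i, j)).
have w_ge := priority_lower_bound w_rec c_gt0 c_deg_lt1 w0_ge.
have w_row1 := priority_row_sum w_rec w0_row1.
have [M M_ge0 g_le] := compact_bounded_family g_cont X_compact.
have enorm_g_le i v : X v -> enorm (g i v) <= n%:R * M.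
  by move=> Xv; apply: le_trans (enorm_le_mx_norm _) _; rewrite ler_wpM2l ?g_le.
have L_ge0 : 0 <= n%:R * M by rewrite mulr_ge0.
split => [alpha_cvg0 i | alpha2_cvg i].
- exact: (consensus_of_vanishing_steps e_sym e_irr e_connected w_row1 delta_gt0
    delta_le1 w_ge L_ge0 enorm_g_le X_convex PX_proj alpha_gt0 x_rec).
- exact: (consensus_weighted_summable e_sym e_irr e_connected w_row1 delta_gt0
    delta_le1 w_ge L_ge0 enorm_g_le X_convex PX_proj alpha_gt0 x_rec).
Qed.
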